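(* For positive integers $p,m$ and real $\alpha>0$, $$\Big((-1)^{m-1}-(-1)^{p-1}\Big)\sum_{n=1}^\infty\frac{H_{n+2\alpha}}{(n+\alpha)^{p+m}}=\Big((-1)^{m-1}-(-1)^{p-1}\Big)H_\alpha\,\zeta(p+m,\alpha+1)+\sum_{i=1}^{p-1}(-1)^{i-1}\zeta(p+1-i,\alpha+1)\,\zeta(m+i,\alpha+1)-\sum_{i=1}^{m-1}(-1)^{i-1}\zeta(m+1-i,\alpha+1)\,\zeta(p+i,\alpha+1).$$ In particular $\sum_{n\ge1}\frac{H_{n+2\alpha}}{(n+\alpha)^3}=H_\alpha\zeta(3,\alpha+1)+\frac12\zeta(2,\alpha+1)^2$.
   Context: $H_\alpha := \sum_{k=1}^\infty\left(\frac1k-\frac1{k+\alpha}\right)$ for real $\alpha$ not a negative integer. $\zeta(s,\alpha+1)=\sum_{n=1}^\infty (n+\alpha)^{-s}$ is the Hurwitz zeta function. Empty sums are $0$. *)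

From Stdlib Require Import Reals Lra List ClassicalEpsilon.
Open Scope R_scope.

(* Value of a convergent series sum_{k>=0} f k (chosen via classical epsilon;
   arbitrary if the series diverges). *)
Definition series (f : nat -> R) : R :=
  epsilon (inhabits 0%R) (fun l => infinite_sum f l).

Definition Hharm (alpha : R) : R :=
  series (fun k => 1 / INR (S k) - 1 / (INR (S k) + alpha)).

(* Hurwitz zeta  zeta(s, alpha+1) = sum_{n>=1} (n+alpha)^(-s), s a natural number *)
Definition hzeta (s : nat) (alpha : R) : R :=
  series (fun k => 1 / (INR (S k) + alpha) ^ s).

(* finite sum  sum_{i=a}^{b} f i  (empty sum = 0 if b < a) *)
Definition fsum (a b : nat) (f : nat -> R) : R :=
  fold_right Rplus 0 (map f (seq a (S b - a))).

(* Write x_n = n + alpha and consider the Tornheim-type double series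
     T(a, b) = sum_{n, k >= 1} 1 / (x_n^a x_k^b (x_n + x_k)),
   which is symmetric in (a, b) since its terms are nonnegative.  The partial
   fraction identity
     1 / (x^(q+1) y^m (x + y)) = 1 / (x^(q+1) y^(m+1)) - 1 / (x^q y^(m+1) (x + y))
   gives T(q+1, m) = zeta(q+1) zeta(m+1) - T(q, m+1), and iterating it expresses
   T(p, m) through zeta products and (-1)^(p-1) T(1, p+m-1).  On the other hand
   H_{x_n + alpha} - H_alpha = sum_k x_n / (x_k (x_n + x_k)), so the series on the
   left-hand side equals H_alpha zeta(p+m) + T(p+m-1, 1).  Subtracting the two
   reductions of T(p, m) = T(m, p) eliminates T(1, p+m-1) and gives the identity. *)
From Stdlib Require Import Reals Lra Lia List ClassicalEpsilon.
Open Scope R_scope.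

Lemma series_correct f : (exists l, infinite_sum f l) -> infinite_sum f (series f).
Proof. intro H. unfold series. apply epsilon_spec. exact H. Qed.

Lemma series_unique f l : infinite_sum f l -> series f = l.
Proof.
  intro H. apply (uniqueness_sum f); [|exact H]. apply series_correct. eauto.
Qed.

Lemma infinite_sum_ext f g l :
  (forall k, f k = g k) -> infinite_sum f l -> infinite_sum g l.
Proof.
  intros E H eps He. destruct (H eps He) as [N HN]. exists N. intros n Hn.
  rewrite <- (sum_eq f g n) by (intros; apply E). apply HN; auto.
Qed.

Lemma infinite_sum_plus f g a b : infinite_sum f a -> infinite_sum g b ->
  infinite_sum (fun k => f k + g k) (a + b).
Proof.
  intros Hf Hg eps He. destruct (CV_plus _ _ _ _ Hf Hg eps He) as [N HN].
  exists N. intros n Hn. rewrite sum_plus. apply HN; auto.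
Qed.

Lemma infinite_sum_minus f g a b : infinite_sum f a -> infinite_sum g b ->
  infinite_sum (fun k => f k - g k) (a - b).
Proof.
  intros Hf Hg eps He. destruct (CV_minus _ _ _ _ Hf Hg eps He) as [N HN].
  exists N. intros n Hn. rewrite minus_sum. apply HN; auto.
Qed.

Lemma Un_cv_const c : Un_cv (fun _ => c) c.
Proof. intros eps He. exists 0%nat. intros. rewrite R_dist_eq. lra. Qed.

Lemma infinite_sum_scal c f a :
  infinite_sum f a -> infinite_sum (fun k => c * f k) (c * a).
Proof.
  intros Hf eps He.
  destruct (CV_mult _ _ _ _ (Un_cv_const c) Hf eps He) as [N HN].
  exists N. intros n Hn. rewrite <- (sum_eq (fun k => f k * c)) by (intros; ring).
  rewrite <- scal_sum. apply HN; auto.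
Qed.

Lemma infinite_sum_le_bound f l B :
  infinite_sum f l -> (forall N, sum_f_R0 f N <= B) -> l <= B.
Proof. intros H HB. apply (Rle_cv_lim HB H (Un_cv_const B)). Qed.

Lemma infinite_sum_le f g a b :
  infinite_sum f a -> infinite_sum g b -> (forall k, f k <= g k) -> a <= b.
Proof.
  intros Hf Hg H. apply (Rle_cv_lim (fun N => sum_Rle f g N (fun n _ => H n)) Hf Hg).
Qed.

Lemma infinite_sum_nonneg f a : infinite_sum f a -> (forall k, 0 <= f k) -> 0 <= a.
Proof.
  intros H Hp. apply Rle_trans with (f 0%nat); [auto|]. apply (sum_incr f 0 a H Hp).
Qed.

Lemma partial_sum_le_infinite_sum f l N :
  infinite_sum f l -> (forall k, 0 <= f k) -> sum_f_R0 f N <= l.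
Proof. intros; apply sum_incr; auto. Qed.

Lemma ex_infinite_sum_bounded f B : (forall k, 0 <= f k) ->
  (forall N, sum_f_R0 f N <= B) -> exists l, infinite_sum f l.
Proof.
  intros Hp HB. apply Un_cv_crit.
  - intro n. simpl. specialize (Hp (S n)). lra.
  - exists B. intros x [i ->]. apply HB.
Qed.

(* Telescoping against 1/(k+1) - 1/(k+2). *)
Lemma sum_inv_sqr_le N : sum_f_R0 (fun k => / INR (S k) ^ 2) N <= 2 - / INR (S N).
Proof.
  induction N as [|N IH]; [simpl; lra|].
  rewrite tech5, (S_INR (S N)), (S_INR N) in *.
  assert (Hu : 0 <= INR N) by apply pos_INR.
  revert IH Hu. generalize (INR N) (sum_f_R0 (fun k => / INR (S k) ^ 2) N).
  intros u s IH Hu.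
  assert (/ (u + 1) - (/ (u + 1 + 1) ^ 2 + / (u + 1 + 1)) = / ((u + 1) * (u + 2) ^ 2))
    as E by (field; lra).
  assert (0 < / ((u + 1) * (u + 2) ^ 2)).
  { apply Rinv_0_lt_compat, Rmult_lt_0_compat; [lra | apply pow_lt; lra]. }
  lra.
Qed.

Lemma ex_infinite_sum_dominated f M : 0 <= M ->
  (forall k, 0 <= f k <= M * / INR (S k) ^ 2) -> exists l, infinite_sum f l.
Proof.
  intros HM H. apply (ex_infinite_sum_bounded f (M * 2)); [intro k; apply H|].
  intro N. apply Rle_trans with (sum_f_R0 (fun k => / INR (S k) ^ 2 * M) N).
  - apply sum_Rle. intros n _. rewrite Rmult_comm. apply H.
  - rewrite <- scal_sum. apply Rmult_le_compat_l; [exact HM|].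
    assert (0 < / INR (S N)) by (apply Rinv_0_lt_compat, lt_0_INR; lia).
    pose proof (sum_inv_sqr_le N). lra.
Qed.

Lemma sum_f_R0_swap (a : nat -> nat -> R) N K :
  sum_f_R0 (fun n => sum_f_R0 (fun k => a n k) K) N =
  sum_f_R0 (fun k => sum_f_R0 (fun n => a n k) N) K.
Proof.
  induction N as [|N IH]; [reflexivity|].
  simpl sum_f_R0 at 1. rewrite IH, <- sum_plus. reflexivity.
Qed.

Lemma Un_cv_sum_f_R0 (F : nat -> nat -> R) r N :
  (forall n, Un_cv (F n) (r n)) ->
  Un_cv (fun K => sum_f_R0 (fun n => F n K) N) (sum_f_R0 r N).
Proof.
  intro H. induction N as [|N IH]; simpl; [apply H | apply CV_plus; auto].
Qed.

(* Swap the finite double sums, then let the inner (row) index go to infinity. *)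
Lemma partial_row_sums_le (a : nat -> nat -> R) r c C :
  (forall n, infinite_sum (a n) (r n)) ->
  (forall k N, sum_f_R0 (fun n => a n k) N <= c k) ->
  (forall K, sum_f_R0 c K <= C) ->
  forall N, sum_f_R0 r N <= C.
Proof.
  intros Hr Hc HC N.
  refine (Rle_cv_lim _ (Un_cv_sum_f_R0 (fun n K => sum_f_R0 (a n) K) r N Hr)
            (Un_cv_const C)).
  intro K. simpl. rewrite sum_f_R0_swap.
  apply Rle_trans with (sum_f_R0 c K); [apply sum_Rle; auto | apply HC].
Qed.

Lemma infinite_sum_swap_nonneg (a : nat -> nat -> R) r L :
  (forall n k, 0 <= a n k) ->
  (forall n, infinite_sum (a n) (r n)) -> infinite_sum r L ->
  exists c, (forall k, infinite_sum (fun n => a n k) (c k)) /\ infinite_sum c L.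
Proof.
  intros Hp Hr HS.
  assert (Hrp : forall n, 0 <= r n) by (intro n; apply (infinite_sum_nonneg (a n)); auto).
  assert (Hle : forall n k, a n k <= r n).
  { intros n k. apply Rle_trans with (sum_f_R0 (a n) k).
    - destruct k as [|k]; simpl; [lra|].
      pose proof (cond_pos_sum (a n) k (Hp n)). pose proof (Hp n (S k)). lra.
    - apply partial_sum_le_infinite_sum; auto. }
  set (c := fun k => series (fun n => a n k)).
  assert (Hc : forall k, infinite_sum (fun n => a n k) (c k)).
  { intro k. apply series_correct, (ex_infinite_sum_bounded _ L); auto.
    intro N. apply Rle_trans with (sum_f_R0 r N).
    - apply sum_Rle; auto.
    - apply partial_sum_le_infinite_sum; auto. }
  assert (Hcp : forall k, 0 <= c k) by (intro k; apply (infinite_sum_nonneg _ _ (Hc k)); auto).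
  assert (HcS : forall K, sum_f_R0 c K <= L).
  { apply (partial_row_sums_le (fun k n => a n k) c r L Hc);
      intros; apply partial_sum_le_infinite_sum; auto. }
  destruct (ex_infinite_sum_bounded c L Hcp HcS) as [C HC].
  exists c. split; [exact Hc|]. replace L with C; [exact HC|].
  apply Rle_antisym.
  - apply (infinite_sum_le_bound c); auto.
  - apply (infinite_sum_le_bound r); auto.
    apply (partial_row_sums_le a r c C Hr);
      intros; apply partial_sum_le_infinite_sum; auto.
Qed.

Lemma infinite_sum_Hharm beta : 0 < beta ->
  infinite_sum (fun j => 1 / INR (S j) - 1 / (INR (S j) + beta)) (Hharm beta).
Proof.
  intro Hb. apply series_correct, (ex_infinite_sum_dominated _ beta); [lra|].
  intro j. assert (Hu : 1 <= INR (S j)) by (rewrite S_INR; pose proof (pos_INR j); lra).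
  generalize (INR (S j)) Hu. intros u Hu1.
  replace (1 / u - 1 / (u + beta)) with (beta * / (u * (u + beta))) by (field; lra).
  split.
  - apply Rmult_le_pos; [lra|]. left. apply Rinv_0_lt_compat. nra.
  - apply Rmult_le_compat_l; [lra|]. apply Rinv_le_contravar; simpl; nra.
Qed.

Section HurwitzDoubleSeries.

Variable alpha : R.
Hypothesis alpha_pos : 0 < alpha.

Definition shifted (k : nat) : R := INR (S k) + alpha.

Lemma shifted_ge1 k : 1 <= shifted k.
Proof. unfold shifted. rewrite S_INR. pose proof (pos_INR k). lra. Qed.

Lemma shifted_pos k : 0 < shifted k.
Proof. pose proof (shifted_ge1 k). lra. Qed.

Lemma inv_shifted_sqr_le k : / shifted k ^ 2 <= / INR (S k) ^ 2.
Proof.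
  apply Rinv_le_contravar; [apply pow_lt, lt_0_INR; lia|].
  apply pow_incr. pose proof (pos_INR (S k)). unfold shifted. lra.
Qed.

Lemma hzeta_term_bound s k : (2 <= s)%nat -> 0 <= 1 / shifted k ^ s <= / shifted k ^ 2.
Proof.
  intro Hs. unfold Rdiv. rewrite Rmult_1_l. pose proof (shifted_pos k). split.
  - left. apply Rinv_0_lt_compat, pow_lt; auto.
  - apply Rinv_le_contravar; [apply pow_lt; auto|]. apply Rle_pow; auto. apply shifted_ge1.
Qed.

Lemma infinite_sum_hzeta s : (2 <= s)%nat ->
  infinite_sum (fun k => 1 / shifted k ^ s) (hzeta s alpha).
Proof.
  intro Hs. apply series_correct, (ex_infinite_sum_dominated _ 1); [lra|].
  intro k. destruct (hzeta_term_bound s k Hs). split; [assumption|].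
  rewrite Rmult_1_l. eapply Rle_trans; [eassumption | apply inv_shifted_sqr_le].
Qed.

Lemma hzeta_nonneg s : (2 <= s)%nat -> 0 <= hzeta s alpha.
Proof.
  intro Hs. apply (infinite_sum_nonneg _ _ (infinite_sum_hzeta s Hs)).
  intro; apply hzeta_term_bound; auto.
Qed.

Definition tornheim_term (a b n k : nat) : R :=
  1 / (shifted n ^ a * shifted k ^ b * (shifted n + shifted k)).
Definition tornheim_row (a b n : nat) : R := series (tornheim_term a b n).
Definition tornheim (a b : nat) : R := series (tornheim_row a b).

Definition tornheim_exponents (a b : nat) : Prop :=
  (1 <= a)%nat /\ (1 <= b)%nat /\ (3 <= a + b)%nat.

Lemma tornheim_term_bound a b n k : tornheim_exponents a b ->
  0 <= tornheim_term a b n k <= / shifted n ^ 2 * / shifted k ^ 2.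
Proof.
  intros [Ha [Hb Hab]]. pose proof (shifted_ge1 n). pose proof (shifted_ge1 k).
  unfold tornheim_term. set (x := shifted n) in *. set (y := shifted k) in *.
  unfold Rdiv. rewrite Rmult_1_l, <- Rinv_mult.
  assert (0 < x ^ 2 * y ^ 2) by (apply Rmult_lt_0_compat; apply pow_lt; lra).
  assert (x ^ 2 * y ^ 2 <= x ^ a * y ^ b * (x + y)).
  { destruct (Nat.eq_dec a 1) as [->|Ha2].
    - assert (y ^ 2 <= y ^ b) by (apply Rle_pow; lia || lra).
      rewrite pow_1. replace (x ^ 2 * y ^ 2) with (x * y ^ 2 * x) by ring.
      assert (0 <= y ^ 2) by (apply pow_le; lra).
      apply Rmult_le_compat; nra.
    - assert (x ^ 2 <= x ^ a) by (apply Rle_pow; lia || lra).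
      assert (y <= y ^ b) by (rewrite <- (pow_1 y) at 1; apply Rle_pow; lia || lra).
      replace (x ^ 2 * y ^ 2) with (x ^ 2 * y * y) by ring.
      apply Rmult_le_compat; try lra.
      + apply Rmult_le_pos; [apply pow_le|]; lra.
      + apply Rmult_le_compat; try lra. apply pow_le; lra. }
  split; [left; apply Rinv_0_lt_compat; lra | apply Rinv_le_contravar; auto].
Qed.

Lemma infinite_sum_tornheim_row a b n : tornheim_exponents a b ->
  infinite_sum (tornheim_term a b n) (tornheim_row a b n).
Proof.
  intro Hab. assert (Hx : 0 <= / shifted n ^ 2).
  { left. apply Rinv_0_lt_compat, pow_lt, shifted_pos. }
  apply series_correct, (ex_infinite_sum_dominated _ (/ shifted n ^ 2) Hx).
  intro k. destruct (tornheim_term_bound a b n k Hab). split; [assumption|].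
  eapply Rle_trans; [eassumption|]. apply Rmult_le_compat_l; [exact Hx|].
  apply inv_shifted_sqr_le.
Qed.

Lemma tornheim_row_bound a b n : tornheim_exponents a b ->
  0 <= tornheim_row a b n <= / shifted n ^ 2 * hzeta 2 alpha.
Proof.
  intro Hab. pose proof (infinite_sum_tornheim_row a b n Hab) as Hrow. split.
  - apply (infinite_sum_nonneg _ _ Hrow). intro k; apply tornheim_term_bound; auto.
  - apply (infinite_sum_le _ _ _ _ Hrow (infinite_sum_scal _ _ _ (infinite_sum_hzeta 2 (le_n 2)))).
    intro k. destruct (tornheim_term_bound a b n k Hab). unfold Rdiv. rewrite Rmult_1_l. auto.
Qed.

Lemma infinite_sum_tornheim a b : tornheim_exponents a b ->
  infinite_sum (tornheim_row a b) (tornheim a b).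
Proof.
  intro Hab. pose proof (hzeta_nonneg 2 (le_n 2)) as Hz.
  apply series_correct, (ex_infinite_sum_dominated _ (hzeta 2 alpha) Hz).
  intro n. destruct (tornheim_row_bound a b n Hab). split; [assumption|].
  eapply Rle_trans; [eassumption|]. rewrite Rmult_comm.
  apply Rmult_le_compat_l; [exact Hz | apply inv_shifted_sqr_le].
Qed.

Lemma tornheim_sym a b : tornheim_exponents a b -> tornheim_exponents b a ->
  tornheim a b = tornheim b a.
Proof.
  intros Hab Hba.
  destruct (infinite_sum_swap_nonneg (tornheim_term a b) (tornheim_row a b) (tornheim a b))
    as [c [Hc HcS]].
  - intros; apply tornheim_term_bound; auto.
  - intro n; apply infinite_sum_tornheim_row; auto.
  - apply infinite_sum_tornheim; auto.
  - symmetry. apply series_unique, (infinite_sum_ext c); [|exact HcS].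
    intro k. symmetry. apply series_unique, (infinite_sum_ext (fun n => tornheim_term a b n k));
      [|apply Hc].
    intro n. unfold tornheim_term. f_equal. ring.
Qed.

Lemma tornheim_succ_l q m : (1 <= q)%nat -> (1 <= m)%nat ->
  tornheim (S q) m = hzeta (S q) alpha * hzeta (S m) alpha - tornheim q (S m).
Proof.
  intros Hq Hm.
  assert (Hsm : (2 <= S m)%nat) by lia. assert (Hsq : (2 <= S q)%nat) by lia.
  assert (Hqm : tornheim_exponents q (S m)) by (unfold tornheim_exponents; lia).
  assert (Hrow : forall n, tornheim_row (S q) m n
            = 1 / shifted n ^ S q * hzeta (S m) alpha - tornheim_row q (S m) n).
  { intro n. apply series_unique.
    apply (infinite_sum_ext
             (fun k => 1 / shifted n ^ S q * (1 / shifted k ^ S m) - tornheim_term q (S m) n k)).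
    - intro k. unfold tornheim_term. pose proof (shifted_pos n). pose proof (shifted_pos k).
      rewrite <- !tech_pow_Rmult. field. repeat split; try apply pow_nonzero; lra.
    - apply infinite_sum_minus; [apply infinite_sum_scal, infinite_sum_hzeta; exact Hsm|].
      apply infinite_sum_tornheim_row; exact Hqm. }
  apply series_unique.
  apply (infinite_sum_ext (fun n => hzeta (S m) alpha * (1 / shifted n ^ S q)
                                    - tornheim_row q (S m) n)).
  - intro n. rewrite Hrow. ring.
  - rewrite (Rmult_comm (hzeta (S q) alpha)).
    apply infinite_sum_minus; [apply infinite_sum_scal, infinite_sum_hzeta; exact Hsq|].
    apply infinite_sum_tornheim; exact Hqm.
Qed.

(* The shift j + x_n + alpha = x_j + x_n is what turns H_{x_n + alpha} - H_alpha
   into a row of the Tornheim series. *)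
Lemma infinite_sum_harmonic_weighted s : (2 <= s)%nat ->
  infinite_sum (fun n => Hharm (INR (S n) + 2 * alpha) / (INR (S n) + alpha) ^ S s)
    (Hharm alpha * hzeta (S s) alpha + tornheim s 1).
Proof.
  intro Hs. assert (Hs1 : tornheim_exponents s 1) by (unfold tornheim_exponents; lia).
  assert (Hterm : forall n, Hharm (INR (S n) + 2 * alpha) / (INR (S n) + alpha) ^ S s
             = Hharm alpha * (1 / shifted n ^ S s) + tornheim_row s 1 n).
  { intro n. pose proof (shifted_pos n) as Hn.
    apply (uniqueness_sum (fun j => / shifted n ^ S s
             * (1 / INR (S j) - 1 / (INR (S j) + (INR (S n) + 2 * alpha))))).
    - replace (Hharm (INR (S n) + 2 * alpha) / (INR (S n) + alpha) ^ S s)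
        with (/ shifted n ^ S s * Hharm (INR (S n) + 2 * alpha))
        by (unfold shifted, Rdiv; ring).
      apply infinite_sum_scal, infinite_sum_Hharm. unfold shifted in Hn. lra.
    - apply (infinite_sum_ext (fun j => 1 / shifted n ^ S s * (1 / INR (S j) - 1 / (INR (S j) + alpha))
                                        + tornheim_term s 1 n j)).
      + intro j. pose proof (lt_0_INR (S j) (Nat.lt_0_succ j)).
        unfold tornheim_term, shifted in *. rewrite <- tech_pow_Rmult, pow_1.
        assert ((INR (S n) + alpha) ^ s <> 0) by (apply pow_nonzero; lra).
        field. repeat split; lra.
      + rewrite (Rmult_comm (Hharm alpha)).
        apply infinite_sum_plus; [apply infinite_sum_scal, infinite_sum_Hharm; exact alpha_pos|].
        apply infinite_sum_tornheim_row; exact Hs1. }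
  apply (infinite_sum_ext (fun n => Hharm alpha * (1 / shifted n ^ S s) + tornheim_row s 1 n)).
  - intro n; symmetry; apply Hterm.
  - apply infinite_sum_plus; [apply infinite_sum_scal, infinite_sum_hzeta; lia|].
    apply infinite_sum_tornheim; exact Hs1.
Qed.

End HurwitzDoubleSeries.

Lemma fsum_ext a b f g :
  (forall i, (a <= i <= b)%nat -> f i = g i) -> fsum a b f = fsum a b g.
Proof.
  intro H. unfold fsum. f_equal. apply map_ext_in. intros i Hi.
  apply in_seq in Hi. apply H. lia.
Qed.

Lemma fsum_1_succ j f : fsum 1 (S j) f = f 1%nat + fsum 1 j (fun i => f (S i)).
Proof.
  unfold fsum. replace (S (S j) - 1)%nat with (S j) by lia.
  replace (S j - 1)%nat with j by lia. simpl. f_equal.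
  rewrite <- seq_shift, map_map. reflexivity.
Qed.

Lemma fsum_opp a b f : fsum a b (fun i => - f i) = - fsum a b f.
Proof.
  unfold fsum. rewrite <- (map_map f Ropp).
  induction (map f (seq a (S b - a))) as [|x l IH]; simpl; [ring | rewrite IH; ring].
Qed.

Lemma tornheim_reduction alpha : 0 < alpha ->
  forall q m, (1 <= q)%nat -> (1 <= m)%nat -> (3 <= q + m)%nat ->
  tornheim alpha q m
  = fsum 1 (q - 1) (fun i => (-1) ^ (i - 1) * hzeta (q + 1 - i) alpha * hzeta (m + i) alpha)
    + (-1) ^ (q - 1) * tornheim alpha 1 (q + m - 1).
Proof.
  intros Ha q. induction q as [|q IH]; intros m Hq Hm Hqm; [lia|].
  destruct q as [|j].
  - replace (1 + m - 1)%nat with m by lia. unfold fsum. simpl. ring.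
  - rewrite (tornheim_succ_l alpha Ha (S j) m), (IH (S m)) by lia.
    replace (S (S j) - 1)%nat with (S j) by lia.
    replace (S j - 1)%nat with j by lia.
    replace (S j + S m - 1)%nat with (S (S j) + m - 1)%nat by lia.
    rewrite fsum_1_succ.
    replace (S (S j) + 1 - 1)%nat with (S (S j)) by lia.
    replace (m + 1)%nat with (S m) by lia.
    rewrite (fsum_ext 1 j
       (fun i => (-1) ^ (S i - 1) * hzeta (S (S j) + 1 - S i) alpha * hzeta (m + S i) alpha)
       (fun i => - ((-1) ^ (i - 1) * hzeta (S j + 1 - i) alpha * hzeta (S m + i) alpha))).
    + rewrite fsum_opp. simpl pow. ring.
    + intros [|i] Hi; [lia|].
      replace (S (S j) + 1 - S (S i))%nat with (S j + 1 - S i)%nat by lia.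
      replace (m + S (S i))%nat with (S m + S i)%nat by lia.
      replace (S (S i) - 1)%nat with (S i) by lia.
      replace (S i - 1)%nat with i by lia. simpl pow. ring.
Qed.

Lemma harmonic_hurwitz_identity (p m : nat) (alpha : R) :
  (1 <= p)%nat -> (1 <= m)%nat -> 0 < alpha ->
  ((-1) ^ (m - 1) - (-1) ^ (p - 1)) *
    series (fun k => Hharm (INR (S k) + 2 * alpha) / (INR (S k) + alpha) ^ (p + m))
  = ((-1) ^ (m - 1) - (-1) ^ (p - 1)) * Hharm alpha * hzeta (p + m) alpha
    + fsum 1 (p - 1) (fun i => (-1) ^ (i - 1) * hzeta (p + 1 - i) alpha * hzeta (m + i) alpha)
    - fsum 1 (m - 1) (fun i => (-1) ^ (i - 1) * hzeta (m + 1 - i) alpha * hzeta (p + i) alpha).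
Proof.
  intros Hp Hm Ha.
  destruct (Nat.le_gt_cases (p + m) 2) as [Hle|Hlt].
  { replace p with 1%nat by lia. replace m with 1%nat by lia. unfold fsum. simpl. ring. }
  pose proof (tornheim_reduction alpha Ha p m Hp Hm ltac:(lia)) as Rpm.
  pose proof (tornheim_reduction alpha Ha m p Hm Hp ltac:(lia)) as Rmp.
  replace (m + p - 1)%nat with (p + m - 1)%nat in Rmp by lia.
  rewrite (tornheim_sym alpha Ha m p) in Rmp by (unfold tornheim_exponents; lia).
  rewrite (tornheim_sym alpha Ha 1 (p + m - 1)) in Rpm, Rmp by (unfold tornheim_exponents; lia).
  replace (p + m)%nat with (S (p + m - 1)) by lia.
  rewrite (series_unique _ _ (infinite_sum_harmonic_weighted alpha Ha (p + m - 1) ltac:(lia))).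
  lra.
Qed.

Theorem mainTheorem19 :
  (forall (p m : nat) (alpha : R), (1 <= p)%nat -> (1 <= m)%nat -> 0 < alpha ->
    ((-1) ^ (m - 1) - (-1) ^ (p - 1)) *
      series (fun k => Hharm (INR (S k) + 2 * alpha) / (INR (S k) + alpha) ^ (p + m))
    = ((-1) ^ (m - 1) - (-1) ^ (p - 1)) * Hharm alpha * hzeta (p + m) alpha
      + fsum 1 (p - 1) (fun i => (-1) ^ (i - 1) * hzeta (p + 1 - i) alpha * hzeta (m + i) alpha)
      - fsum 1 (m - 1) (fun i => (-1) ^ (i - 1) * hzeta (m + 1 - i) alpha * hzeta (p + i) alpha))
  /\
  (forall alpha : R, 0 < alpha ->
    series (fun k => Hharm (INR (S k) + 2 * alpha) / (INR (S k) + alpha) ^ 3)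
    = Hharm alpha * hzeta 3 alpha + / 2 * (hzeta 2 alpha) ^ 2).
Proof.
  split; [exact harmonic_hurwitz_identity|].
  intros alpha Ha.
  pose proof (harmonic_hurwitz_identity 1 2 alpha (le_n 1) (le_S _ _ (le_n 1)) Ha) as H.
  set (lhs := series _) in *.
  unfold fsum in H. simpl in H. lra.
Qed.
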